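(* Let $n\ge 2$ and let $Q\in\mathbb{R}^{n\times n}$ be an irreducible generator matrix of a continuous-time Markov chain ($q_{ij}\ge0$ for $i\ne j$, $q_{ii}=-\sum_{j\ne i}q_{ij}$). Let $B=\operatorname{diag}(\beta_i)$ with $\beta_i>0$ and $D=\operatorname{diag}(\delta_i)$ with $\delta_i\ge 0$. Let $(\boldsymbol p(t),\boldsymbol x(t))$ solve \[ \dot{\boldsymbol p}=(B-D-L(\boldsymbol x))\boldsymbol p-\operatorname{diag}(\boldsymbol p)B\boldsymbol p,\qquad \dot{\boldsymbol x}=Q^\top\boldsymbol x, \] with $\boldsymbol p(0)\in[0,1]^n$ and $\boldsymbol x(0)$ having entries in $(0,1)$ summing to $1$, where $L(\boldsymbol x)$ has entries $l_{ii}(\boldsymbol x)=\sum_{j\ne i}q_{ji}\frac{x_j}{x_i}$ and $l_{ij}(\boldsymbol x)=-q_{ji}\frac{x_j}{x_i}$ for $i\ne j$. If $p_i(t)\to 0$ as $t\to\infty$ for some $i\in\{1,\dots,n\}$, then $\boldsymbol p(t)\to\boldsymbol 0$ as $t\to\infty$. *)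

From HB Require Import structures.
From mathcomp Require Import all_boot all_order all_algebra.
From mathcomp Require Import all_classical all_reals all_analysis.
Set Implicit Arguments. Unset Strict Implicit. Unset Printing Implicit Defensive.
Import Order.TTheory GRing.Theory Num.Theory.
Import numFieldNormedType.Exports.
Local Open Scope classical_set_scope.
Local Open Scope ring_scope.

Definition generator (R : realType) (n : nat) (Q : 'M[R]_n) : Prop :=
  (forall i j : 'I_n, i != j -> 0 <= Q i j) /\
  (forall i : 'I_n, Q i i = - \sum_(j < n | j != i) Q i j).

Definition irreducible_gen (R : realType) (n : nat) (Q : 'M[R]_n) : Prop :=
  forall i j : 'I_n, connect (fun a b : 'I_n => 0 < Q a b) i j.

Definition Lmat (R : realType) (n : nat) (Q : 'M[R]_n) (x : 'I_n -> R) : 'M[R]_n :=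
  \matrix_(i, j) (if i == j then \sum_(k < n | k != i) Q k i * x k / x i
                  else - (Q j i * x j / x i)).

Definition diagf (R : realType) (n : nat) (v : 'I_n -> R) : 'M[R]_n :=
  \matrix_(i, j) (if i == j then v i else 0).

Definition p_rhs (R : realType) (n : nat) (Q : 'M[R]_n) (beta delta : 'I_n -> R)
  (x p : 'I_n -> R) (i : 'I_n) : R :=
  \sum_(j < n) (diagf beta - diagf delta - Lmat Q x) i j * p j
  - p i * \sum_(j < n) diagf beta i j * p j.

Definition x_rhs (R : realType) (n : nat) (Q : 'M[R]_n) (x : 'I_n -> R) (i : 'I_n) : R :=
  \sum_(j < n) Q^T i j * x j.

Definition is_solution (R : realType) (n : nat) (Q : 'M[R]_n) (beta delta : 'I_n -> R)
  (p x : R -> 'I_n -> R) : Prop :=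
  (forall i : 'I_n, {within `[0, +oo[, continuous (fun t => p t i)}) /\
  (forall i : 'I_n, {within `[0, +oo[, continuous (fun t => x t i)}) /\
  (forall (t : R) (i : 'I_n), 0 < t ->
      is_derive t 1 (fun s => p s i) (p_rhs Q beta delta (x t) (p t) i)) /\
  (forall (t : R) (i : 'I_n), 0 < t ->
      is_derive t 1 (fun s => x s i) (x_rhs Q (x t) i)).

From HB Require Import structures.
From mathcomp Require Import all_boot all_order all_algebra.
From mathcomp Require Import all_classical all_reals all_analysis.
From mathcomp Require Import ring lra.
Import Order.TTheory GRing.Theory Num.Theory.
Import numFieldNormedType.Exports.
Local Open Scope classical_set_scope.
Local Open Scope ring_scope.

Set Implicit Arguments.
Unset Strict Implicit.

(* The migration equation x' = Q^T x is linear, and with c := sum_l -q_ll the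
   rescaled y := e^(c t) x solves y' = (Q^T + c I) y with a nonnegative matrix:
   y is nondecreasing and y_k(s + 1) >= q_jk y_j(s) along every edge j -> k.
   Irreducibility and conservation of sum_i x_i = 1 then give x_i >= m > 0 for
   all large t.  At a first contact with one of the moving barriers
   -eps e^(L t) and 1 + eps e^(L t) the field points strictly inward, so p
   stays in [0,1]^n.  There p_k' >= q_jk m p_j - C p_k and p_j' >= -K: if
   p_k -> 0 while p_j(t) >= eps for arbitrarily large t, then p_j >= eps/2 on
   windows of fixed length eps/(2K), over which p_k would have to grow by a
   fixed amount.  Hence p_k -> 0 and q_jk > 0 imply p_j -> 0, and
   irreducibility propagates this from i to every j. *)

Lemma ler_term_sum (R : numDomainType) (I : finType) (F : I -> R) (i : I) :
  (forall j, 0 <= F j) -> F i <= \sum_j F j.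
Proof. by move=> F_ge0; rewrite (bigD1 i) //= lerDl sumr_ge0. Qed.

Lemma connect_ind_backward (T : finType) (e : rel T) (P : T -> Prop) (b : T) :
  P b -> (forall u v, e u v -> P v -> P u) -> forall a, connect e a b -> P a.
Proof.
move=> Pb step a /connectP[s]; elim: s a => [|v s IH] a /=; first by move=> _ <-.
by case/andP=> e_av path_vs b_last; apply: step e_av (IH v path_vs b_last).
Qed.

Section RealAnalysis.
Variable R : realType.

Lemma is_derive_expRM (c t : R) :
  is_derive t 1 (fun s => expR (c * s)) (c * expR (c * t)).
Proof.
have lin : is_derive t 1 (fun s : R => c * s) c.
  by apply: is_derive_eq (is_deriveZ c (is_derive_id t 1)) _; rewrite /GRing.scale /= mulr1.
by apply: is_derive_eq (is_derive1_comp (is_derive_expR (c * t)) lin) _; rewrite mulrC.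
Qed.

Lemma is_derive_continuous (f : R -> R) (t d : R) :
  is_derive t 1 f d -> {for t, continuous f}.
Proof. by case=> /derivable1_diffP /differentiable_continuous. Qed.

Lemma derive_ge_increment (f df : R -> R) (c a b : R) : a <= b ->
  (forall u, a <= u <= b -> is_derive u 1 f (df u)) ->
  (forall u, a < u < b -> c <= df u) ->
  f a + c * (b - a) <= f b.
Proof.
move=> ab fd c_le; have [<-|a_neq_b] := eqVneq a b; first by rewrite subrr mulr0 addr0.
have a_lt_b : a < b by rewrite lt_neqAle a_neq_b.
have fd_oo u : u \in `]a, b[ -> is_derive u 1 f (df u).
  by rewrite in_itv => /andP[au ub]; apply: fd; rewrite !ltW.
have fc : {within `[a, b], continuous f}.
  by apply: derivable_within_continuous => u; rewrite in_itv => /fd [].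
have [u] := MVT a_lt_b fd_oo fc; rewrite in_itv /= => /c_le c_le_df fab.
have : c * (b - a) <= df u * (b - a) by rewrite ler_wpM2r // subr_ge0.
lra.
Qed.

Lemma real_induction (P : R -> Prop) (a b : R) :
  P a ->
  (forall T, a < T <= b -> (forall t, a <= t < T -> P t) -> P T) ->
  (forall T, a <= T < b -> P T ->
     exists2 d, 0 < d & forall t, T <= t < T + d -> P t) ->
  forall t, a <= t <= b -> P t.
Proof.
move=> Pa closed open t /andP[a_t t_b]; apply: contrapT => nPt.
pose S := [set s | a <= s /\ ~ P s].
have St : S t by [].
have inf_le s : S s -> inf S <= s by apply: ge_inf; exists a => ? [].
have a_inf : a <= inf S by apply: lb_le_inf; [exists t | move=> ? []].
have P_below u : a <= u < inf S -> P u.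
  case/andP=> a_u u_inf; apply: contrapT => nPu.
  by have := inf_le u (conj a_u nPu); rewrite leNgt u_inf.
have P_inf : P (inf S).
  have [<-|a_neq] := eqVneq a (inf S); first exact: Pa.
  apply: closed P_below; rewrite lt_neqAle a_neq a_inf /=.
  exact: le_trans (inf_le t St) t_b.
have inf_lt_b : inf S < b.
  apply: lt_le_trans t_b; rewrite lt_neqAle inf_le // andbT.
  by apply/eqP => inf_t; apply: nPt; rewrite -inf_t.
have [d d_gt0 Pd] := open _ (introT andP (conj a_inf inf_lt_b)) P_inf.
have : inf S + d <= inf S.
  apply: lb_le_inf => [|s Ss]; first by exists t.
  rewrite leNgt; apply/negP => s_lt; case: (Ss) => _; apply; apply: Pd.
  by rewrite s_lt andbT inf_le.
lra.
Qed.

Lemma within_continuous_pos_right (I : finType) (f : I -> R -> R) (a T : R) :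
  (forall i, {within `[a, +oo[, continuous (f i)}) -> a <= T ->
  (forall i, 0 < f i T) ->
  exists2 d, 0 < d & forall t, T <= t < T + d -> forall i, 0 < f i t.
Proof.
move=> fc a_T f_pos.
have near_pos i : \forall t \near within `[a, +oo[ (nbhs T), 0 < f i t.
  have := (subspace_continuousP _ _).1 (fc i) T.
  rewrite /= in_itv /= andbT => /(_ a_T) fi_cvg.
  exact: cvgr_gt fi_cvg _ (f_pos i).
have : \forall t \near within `[a, +oo[ (nbhs T), forall i, 0 < f i t.
  exact: filter_forall.
rewrite /within /= => /nbhs_ballP[e e_gt0 He].
exists e => // t /andP[T_t t_lt] i; apply: He.
- by rewrite -ball_normE /= distrC ger0_norm ?subr_ge0 // ltrBlDl.
- by rewrite /= in_itv /= andbT (le_trans a_T).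
Qed.

Lemma derive_gt0_near_left (g : R -> R) (T d : R) :
  is_derive T 1 g d -> 0 < d -> \forall t \near T^'-, g t < g T.
Proof.
case=> g_drv g_val d_gt0.
have q_cvg : (fun h => h^-1 *: ((g \o shift T) (h *: 1) - g T)) @ 0^' --> d.
  by rewrite -g_val.
have /cvg_at_leftNP := cvg_dnbhs_at_left q_cvg.
rewrite oppr0 => /cvgr_gt /(_ 0 d_gt0) q_pos.
apply/nbhs_left0P; apply: filterS2 q_pos (nbhs_right_gt 0) => e /= q_e e_gt0.
move: q_e; rewrite /GRing.scale /= mulr1 [- e + T]addrC.
by rewrite nmulr_rgt0 ?invr_lt0 ?oppr_lt0 // subr_lt0.
Qed.

Lemma barrier_positive (I : finType) (g dg : I -> R -> R) (a b : R) :
  (forall i, 0 < g i a) ->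
  (forall i, {within `[a, +oo[, continuous (g i)}) ->
  (forall i t, a < t -> is_derive t 1 (g i) (dg i t)) ->
  (forall i t, a < t <= b -> (forall j, 0 <= g j t) -> g i t = 0 -> 0 < dg i t) ->
  forall t, a <= t <= b -> forall i, 0 < g i t.
Proof.
move=> g_a gc gd dg_pos; apply: real_induction => //; last first.
  by move=> T /andP[a_T _]; exact: within_continuous_pos_right.
move=> T /andP[a_T T_b] g_pos.
have near_pos j : \forall t \near T^'-, 0 < g j t.
  apply: (filterS2 _ _ (nbhs_left_ge a_T) (nbhs_left_lt T)) => t a_t t_T.
  by apply: g_pos; rewrite a_t t_T.
have g_ge0 j : 0 <= g j T.
  rewrite leNgt; apply/negP => gT_lt0.
  have gj_cvg := cvg_at_left_filter (is_derive_continuous (gd j T a_T)).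
  have [t [/lt_trans gt_pos /gt_pos]] : exists t, 0 < g j t /\ g j t < 0.
    apply: (@filter_ex _ T^'-).
    apply: (filterS2 _ _ (near_pos j) (cvgr_lt _ gj_cvg _ gT_lt0)).
    by move=> t; split.
  by rewrite ltxx.
move=> i; rewrite lt_neqAle g_ge0 andbT eq_sym; apply/eqP => gT0.
have dg_gt0 : 0 < dg i T by apply: dg_pos => //; rewrite a_T.
have [t [/lt_trans gt_pos]] : exists t, 0 < g i t /\ g i t < g i T.
  apply: (@filter_ex _ T^'-).
  apply: (filterS2 _ _ (near_pos i) (derive_gt0_near_left (gd i T a_T) dg_gt0)).
  by move=> t; split.
by rewrite gT0 => /gt_pos; rewrite ltxx.
Qed.

Lemma forcing_growth (f g df dg : R -> R) (t h a C K eta : R) :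
  0 <= h -> 0 <= a -> 0 <= C -> 0 <= K ->
  (forall u, t <= u <= t + h -> is_derive u 1 f (df u)) ->
  (forall u, t <= u <= t + h -> is_derive u 1 g (dg u)) ->
  (forall u, t < u < t + h -> - K <= df u) ->
  (forall u, t < u < t + h -> a * f u - C * g u <= dg u) ->
  (forall u, t < u < t + h -> g u <= eta) ->
  g t + (a * (f t - K * h) - C * eta) * h <= g (t + h).
Proof.
move=> h_ge0 a_ge0 C_ge0 K_ge0 fd gd df_ge dg_ge g_le.
have f_ge u : t <= u <= t + h -> f t - K * h <= f u.
  case/andP=> t_u u_th.
  have : f t + - K * (u - t) <= f u.
    apply: derive_ge_increment t_u _ _ => v /andP[t_v v_u].
      by apply: fd; rewrite t_v (le_trans v_u).
    by apply: df_ge; rewrite t_v (lt_le_trans v_u).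
  have : K * (u - t) <= K * h by apply: ler_wpM2l => //; lra.
  lra.
have := @derive_ge_increment g dg (a * (f t - K * h) - C * eta) t (t + h).
rewrite [t + h - t]addrC addKr lerDl; apply=> // u /andP[t_u u_th].
have : a * (f t - K * h) <= a * f u by rewrite ler_wpM2l // f_ge // !ltW.
have : C * g u <= C * eta by rewrite ler_wpM2l // g_le // t_u.
have := dg_ge u (introT andP (conj t_u u_th)).
lra.
Qed.

Lemma cvg0_of_forcing (f g df dg : R -> R) (T0 a C K : R) :
  0 < a -> 0 <= C -> 0 < K ->
  (forall t, T0 < t -> is_derive t 1 f (df t)) ->
  (forall t, T0 < t -> is_derive t 1 g (dg t)) ->
  (forall t, T0 < t -> 0 <= f t) ->
  (forall t, T0 < t -> - K <= df t) ->
  (forall t, T0 < t -> a * f t - C * g t <= dg t) ->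
  g t @[t --> +oo] --> 0 -> f t @[t --> +oo] --> 0.
Proof.
move=> a_gt0 C_ge0 K_gt0 fd gd f_ge0 df_ge dg_ge g_cvg.
apply/cvgrPdist_lt => eps eps_gt0.
have [h h_gt0 Kh] : exists2 h, 0 < h & K * h = eps / 2.
  exists (eps / (2 * K)); first by rewrite divr_gt0 // mulr_gt0.
  by field; rewrite gt_eqF.
have aeh_gt0 : 0 < a * eps * h by rewrite !mulr_gt0.
have [eta eta_gt0 eta_def] : exists2 eta, 0 < eta & eta * (C * h + 2) = a * eps * h / 4.
  have Ch2_gt0 : 0 < C * h + 2 by have := mulr_ge0 C_ge0 (ltW h_gt0); lra.
  exists (a * eps * h / (4 * (C * h + 2))); first by rewrite divr_gt0 ?mulr_gt0.
  by field; rewrite gt_eqF.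
move/cvgrPdist_lt: g_cvg => /(_ eta eta_gt0) [M [_ g_small]].
exists (Num.max M T0); split; first exact: num_real.
move=> t; rewrite gt_max => /andP[M_t T0_t].
have T0_lt u : t <= u -> T0 < u by apply: lt_le_trans.
have g_lt u : t <= u -> `|g u| < eta.
  by move=> t_u; rewrite -normrN -sub0r; apply/g_small/(lt_le_trans M_t).
rewrite sub0r normrN ger0_norm ?f_ge0 // ltNge; apply/negP => eps_le_ft.
have growth : g t + (a * (f t - K * h) - C * eta) * h <= g (t + h).
  apply: (@forcing_growth f g df dg t h a C K eta (ltW h_gt0) (ltW a_gt0) C_ge0
    (ltW K_gt0)) => u /andP[t_u _].
  - exact/fd/T0_lt.
  - exact/gd/T0_lt.
  - exact/df_ge/T0_lt/ltW.
  - exact/dg_ge/T0_lt/ltW.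
  - exact: le_trans (ler_norm _) (ltW (g_lt _ (ltW t_u))).
have ft_ge : eps / 2 <= f t - K * h by rewrite Kh; lra.
have := ler_wpM2r (ltW h_gt0) (ler_wpM2l (ltW a_gt0) ft_ge).
have := g_lt t (lexx t); have := g_lt (t + h) (ler_wpDr (ltW h_gt0) (lexx t)).
rewrite !ltr_norml; lra.
Qed.

End RealAnalysis.

Section Generator.
Variables (R : realType) (n : nat) (Q : 'M[R]_n).
Hypothesis Qgen : generator Q.

Lemma generator_offdiag_ge0 i j : i != j -> 0 <= Q i j.
Proof. by case: Qgen => Q_ge0 _; apply: Q_ge0. Qed.

Lemma generator_diag_le0 i : Q i i <= 0.
Proof.
case: Qgen => _ ->; rewrite oppr_le0; apply: sumr_ge0 => j j_i.
by apply: generator_offdiag_ge0; rewrite eq_sym.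
Qed.

Lemma generator_pos_neq i j : 0 < Q i j -> i != j.
Proof. by apply: contraTneq => ->; rewrite -leNgt generator_diag_le0. Qed.

Lemma generator_rowsum i : \sum_j Q i j = 0.
Proof.
case: Qgen => _ Q_ii; rewrite (bigD1 i) //= Q_ii addrC.
by rewrite (eq_bigl (fun j => j != i)) ?subrr.
Qed.

Definition total_rate : R := \sum_l - Q l l.

Lemma diag_total_rate_ge0 k : 0 <= Q k k + total_rate.
Proof.
rewrite /total_rate (bigD1 k) //= addrA addrN add0r.
by apply: sumr_ge0 => l _; rewrite oppr_ge0 generator_diag_le0.
Qed.

Lemma x_rhsE (v : 'I_n -> R) k : x_rhs Q v k = \sum_j Q j k * v j.
Proof. by apply: eq_bigr => j _; rewrite mxE. Qed.

Lemma x_rhs_shiftE (v : 'I_n -> R) k :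
  x_rhs Q v k + total_rate * v k =
  \sum_(j | j != k) Q j k * v j + (Q k k + total_rate) * v k.
Proof. by rewrite x_rhsE (bigD1 k) //= mulrDl addrA [Q k k * _ + _]addrC. Qed.

Lemma x_rhs_shift_ge0 (v : 'I_n -> R) k :
  (forall l, 0 <= v l) -> 0 <= x_rhs Q v k + total_rate * v k.
Proof.
move=> v_ge0; rewrite x_rhs_shiftE addr_ge0 ?mulr_ge0 ?diag_total_rate_ge0 //.
by apply: sumr_ge0 => j j_k; rewrite mulr_ge0 ?generator_offdiag_ge0.
Qed.

Lemma x_rhs_shift_ge (v : 'I_n -> R) j k : (forall l, 0 <= v l) -> j != k ->
  Q j k * v j <= x_rhs Q v k + total_rate * v k.
Proof.
move=> v_ge0 j_k; rewrite x_rhs_shiftE (bigD1 j) //= -addrA lerDl.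
rewrite addr_ge0 ?mulr_ge0 ?diag_total_rate_ge0 //.
by apply: sumr_ge0 => l /andP[l_k _]; rewrite mulr_ge0 ?generator_offdiag_ge0.
Qed.

Lemma sum_x_rhs (v : 'I_n -> R) : \sum_k x_rhs Q v k = 0.
Proof.
under eq_bigr do rewrite x_rhsE.
by rewrite exchange_big big1 // => j _; rewrite -mulr_suml generator_rowsum mul0r.
Qed.

End Generator.

Section ForwardEquation.
Variables (R : realType) (n : nat) (Q : 'M[R]_n) (x : R -> 'I_n -> R).
Hypothesis Qgen : generator Q.
Hypothesis x_cont : forall k, {within `[0, +oo[, continuous (fun t => x t k)}.
Hypothesis x_deriv : forall (t : R) (k : 'I_n), 0 < t ->
  is_derive t 1 (fun s => x s k) (x_rhs Q (x t) k).

Let c := total_rate Q.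
Let y t k := expR (c * t) * x t k.
Let dy t k := expR (c * t) * (x_rhs Q (x t) k + c * x t k).

Lemma y_deriv (t : R) (k : 'I_n) : 0 < t -> is_derive t 1 (y^~ k) (dy t k).
Proof.
move=> t_gt0; apply: is_derive_eq (is_deriveM (is_derive_expRM c t) (x_deriv k t_gt0)) _.
by rewrite /GRing.scale /dy /=; ring.
Qed.

Lemma y_ge_increment (k : 'I_n) (a b : R) : 0 < a <= b ->
  (forall t, a < t < b -> forall l, 0 <= x t l) -> y a k <= y b k.
Proof.
move=> /andP[a_gt0 a_b] x_ge0.
have := @derive_ge_increment _ (y^~ k) (dy^~ k) 0 a b a_b.
rewrite mul0r addr0; apply=> [t /andP[a_t _]|t t_ab].
  exact/y_deriv/(lt_le_trans a_gt0).
by rewrite mulr_ge0 ?expR_ge0 ?x_rhs_shift_ge0 // => l; apply: x_ge0.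
Qed.

Hypothesis x0_pos : forall k, 0 < x 0 k.

Lemma x_pos (t : R) : 0 <= t -> forall k, 0 < x t k.
Proof.
move=> t_ge0; apply: (@real_induction _ (fun s => forall k, 0 < x s k) 0 t) => //.
- move=> T /andP[T_gt0 _] x_pos_T k.
  have T2_gt0 : 0 < T / 2 by rewrite divr_gt0.
  have y_T2 : 0 < y (T / 2) k by rewrite mulr_gt0 ?expR_gt0 // x_pos_T // ltW //=; lra.
  have : y (T / 2) k <= y T k.
    apply: y_ge_increment => [|s /andP[T2_s s_T] l]; first by rewrite T2_gt0 /=; lra.
    by apply/ltW/x_pos_T; rewrite s_T andbT ltW // (lt_trans T2_gt0).
  by move=> /(lt_le_trans y_T2); rewrite pmulr_rgt0 ?expR_gt0.
- by move=> T /andP[T_ge0 _]; apply: within_continuous_pos_right.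
- by rewrite lexx t_ge0.
Qed.

Lemma y_nondecr (k : 'I_n) (s u : R) : 0 < s <= u -> y s k <= y u k.
Proof.
case/andP=> s_gt0 s_u; apply: y_ge_increment => [|t /andP[s_t _] l].
  by rewrite s_gt0.
by apply/ltW/x_pos/ltW/(lt_trans s_gt0).
Qed.

Lemma y_edge (j k : 'I_n) (s : R) :
  0 < Q j k -> 0 < s -> Q j k * y s j <= y (s + 1) k.
Proof.
move=> Qjk_gt0 s_gt0; have j_neq_k := generator_pos_neq Qgen Qjk_gt0.
have x_ge0 t : s < t -> forall l, 0 <= x t l.
  by move=> s_t l; apply/ltW/x_pos/ltW/(lt_trans s_gt0).
have : y s k + Q j k * y s j * (s + 1 - s) <= y (s + 1) k.
  apply: (@derive_ge_increment _ (y^~ k) (dy^~ k)) => [|t /andP[s_t _]|t /andP[s_t _]].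
  - by rewrite lerDl.
  - exact/y_deriv/(lt_le_trans s_gt0).
  - have y_st : y s j <= y t j by apply: y_nondecr; rewrite s_gt0 ltW.
    apply: le_trans (ler_wpM2l (ltW Qjk_gt0) y_st) _.
    rewrite /y /dy mulrCA ler_wpM2l ?expR_ge0 //.
    by apply: (x_rhs_shift_ge Qgen) j_neq_k; apply: x_ge0 s_t.
have : 0 <= y s k by rewrite mulr_ge0 ?expR_ge0 // ltW // x_pos // ltW.
rewrite addrAC subrr add0r mulr1; lra.
Qed.

Let reaches j k := exists2 T0 : R, 0 <= T0 & exists2 gamma : R, 0 < gamma &
  forall s T, 0 < s -> T0 <= T -> gamma * y s j <= y (s + T) k.

Lemma reaches_refl (k : 'I_n) : reaches k k.
Proof.
exists 0 => //; exists 1 => // s T s_gt0 T_ge0.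
by rewrite mul1r y_nondecr // s_gt0 lerDl.
Qed.

Lemma reaches_edge (j v k : 'I_n) : 0 < Q j v -> reaches v k -> reaches j k.
Proof.
move=> Qjv_gt0 [T0 T0_ge0 [gamma gamma_gt0 reach_vk]].
exists (T0 + 1); first by rewrite addr_ge0.
exists (gamma * Q j v); first by rewrite mulr_gt0.
move=> s T s_gt0 T0_T.
have s1_gt0 : 0 < s + 1 by rewrite addr_gt0.
have T0_T1 : T0 <= T - 1 by rewrite lerBrDr.
have -> : s + T = s + 1 + (T - 1) by ring.
apply: le_trans (reach_vk _ _ s1_gt0 T0_T1).
by rewrite -mulrA; apply: ler_wpM2l; [exact: ltW | exact: y_edge].
Qed.

Lemma reaches_irreducible : irreducible_gen Q -> forall j k, reaches j k.
Proof.
move=> Qirr j k; apply: (connect_ind_backward (P := reaches^~ k)) (Qirr j k).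
- exact: reaches_refl.
- by move=> u v; apply: reaches_edge.
Qed.

Lemma x_mass (t : R) : 0 <= t -> \sum_k x t k = \sum_k x 0 k.
Proof.
rewrite le_eqVlt => /predU1P[<- //|t_gt0].
have S_cont : {within `[0, +oo[, continuous (fun s => \sum_k x s k)}.
  apply/subspace_continuousP => s s_ge0; apply: cvg_big => // [|k _].
    exact: add_continuous.
  exact: (subspace_continuousP _ _).1 (@x_cont k) s s_ge0.
have sub_t : `[0, t] `<=` `[0, +oo[ by move=> u; rewrite /= !in_itv /= => /andP[-> _].
have S_deriv s : s \in `]0, t[ -> is_derive s 1 (fun s => \sum_k x s k) 0.
  rewrite in_itv => /andP[s_gt0 _].
  have := is_derive_sum (fun k => @x_deriv s k s_gt0).
  by rewrite fct_sumE sum_x_rhs.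
have [u _] := MVT_segment (ltW t_gt0) S_deriv (continuous_subspaceW sub_t S_cont).
by rewrite mul0r => /eqP; rewrite subr_eq0 => /eqP.
Qed.

Lemma y_reach_uniform : irreducible_gen Q ->
  exists2 T1 : R, 0 <= T1 & exists2 S : R, 0 < S &
    forall s k, 0 < s -> \sum_j y s j <= S * y (s + T1) k.
Proof.
move=> Qirr.
have /choice[Tg Tg_spec] : forall jk : 'I_n * 'I_n, exists Tg : R * R,
    [/\ 0 <= Tg.1, 0 < Tg.2 & forall s T, 0 < s -> Tg.1 <= T ->
      Tg.2 * y s jk.1 <= y (s + T) jk.2].
  move=> [j k]; have [T0 T0_ge0 [gamma gamma_gt0 reach_jk]] := reaches_irreducible Qirr j k.
  by exists (T0, gamma).
have T0_ge0 jk : 0 <= (Tg jk).1 by case: (Tg_spec jk).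
have invg_ge0 jk : 0 <= ((Tg jk).2)^-1 by case: (Tg_spec jk) => _ /ltW; rewrite invr_ge0.
exists (\sum_jk (Tg jk).1); first exact: sumr_ge0.
exists (1 + \sum_j \sum_l ((Tg (j, l)).2)^-1).
  by rewrite ltr_pwDl // sumr_ge0 // => j _; apply: sumr_ge0.
move=> s k s_gt0.
have y_s_le j : y s j <= ((Tg (j, k)).2)^-1 * y (s + \sum_jk (Tg jk).1) k.
  case: (Tg_spec (j, k)) => /= _ g_gt0 reach_jk.
  by rewrite ler_pdivlMl //; apply: reach_jk => //; exact: ler_term_sum.
apply: le_trans (ler_sum _ (fun j _ => y_s_le j)) _.
have y_ge0 : 0 <= y (s + \sum_jk (Tg jk).1) k.
  by rewrite /y mulr_ge0 ?expR_ge0 //; apply/ltW/x_pos; rewrite addr_ge0 ?(ltW s_gt0) ?sumr_ge0.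
rewrite -mulr_suml ler_wpM2r //.
apply: le_trans (ler_wpDl ler01 (lexx _)).
by apply: ler_sum => j _; apply: ler_term_sum.
Qed.

Lemma x_lower_bound : irreducible_gen Q -> \sum_k x 0 k = 1 ->
  exists2 T1 : R, 0 < T1 & exists2 m : R, 0 < m &
    forall t, T1 <= t -> forall k, m <= x t k.
Proof.
move=> Qirr x0_sum; have [T1 T1_ge0 [S S_gt0 reach]] := y_reach_uniform Qirr.
exists (T1 + 1); first by rewrite ltr_wpDl.
exists ((expR (c * T1) * S)^-1); first by rewrite invr_gt0 mulr_gt0 ?expR_gt0.
move=> t T1_t k; have [s s_gt0 ->] : exists2 s, 0 < s & t = s + T1.
  by exists (t - T1); [lra | rewrite subrK].
have := reach s k s_gt0.
rewrite /y -mulr_sumr x_mass ?(ltW s_gt0) // x0_sum mulr1.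
rewrite [c * (s + T1)]mulrDr expRD => ineq.
rewrite -[_^-1]mul1r ler_pdivrMr ?mulr_gt0 ?expR_gt0 //.
by rewrite -(ler_pM2l (expR_gt0 (c * s))) mulr1; lra.
Qed.

Lemma x_le1 : \sum_k x 0 k = 1 -> forall t, 0 <= t -> forall k, x t k <= 1.
Proof.
move=> x0_sum t t_ge0 k; rewrite -x0_sum -(x_mass t_ge0).
by apply: ler_term_sum => l; exact/ltW/x_pos.
Qed.

End ForwardEquation.

Section LogisticField.
Variables (R : realType) (n : nat) (Q : 'M[R]_n) (beta delta : 'I_n -> R).

Lemma p_rhsE (xv pv : 'I_n -> R) (k : 'I_n) :
  p_rhs Q beta delta xv pv k = (beta k - delta k - beta k * pv k) * pv k +
    \sum_(j | j != k) Q j k * xv j / xv k * (pv j - pv k).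
Proof.
rewrite /p_rhs (bigD1 k) //= !mxE eqxx.
have -> : \sum_j diagf beta k j * pv j = beta k * pv k.
  rewrite (bigD1 k) //= mxE eqxx big1 ?addr0 // => j j_k.
  by rewrite mxE eq_sym (negbTE j_k) mul0r.
have -> : \sum_(j | true && (j != k)) (diagf beta - diagf delta - Lmat Q xv) k j * pv j =
    \sum_(j | j != k) Q j k * xv j / xv k * pv j.
  apply: eq_bigr => j j_k; rewrite !mxE eq_sym (negbTE j_k).
  by rewrite !subr0 sub0r opprK.
under [X in _ = _ + X]eq_bigr do rewrite mulrBr.
by rewrite sumrB -mulr_suml -!mulr_suml; ring.
Qed.

Hypothesis Qgen : generator Q.

Lemma migration_weight_ge0 (xv : 'I_n -> R) (j k : 'I_n) :
  (forall l, 0 < xv l) -> j != k -> 0 <= Q j k * xv j / xv k.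
Proof.
move=> xv_gt0 j_k.
by rewrite !mulr_ge0 ?invr_ge0 ?(ltW (xv_gt0 _)) ?(generator_offdiag_ge0 Qgen j_k).
Qed.

Lemma p_rhs_lower_barrier (xv pv : 'I_n -> R) (k : 'I_n) (eta : R) :
  (forall l, 0 < xv l) -> 0 <= beta k -> 0 <= delta k -> 0 <= eta <= 1 ->
  (forall j, - eta <= pv j) -> pv k = - eta ->
  - (2 * beta k * eta) <= p_rhs Q beta delta xv pv k.
Proof.
move=> xv_gt0 beta_ge0 delta_ge0 /andP[eta_ge0 eta_le1] pv_ge pvk.
have sum_ge0 : 0 <= \sum_(j | j != k) Q j k * xv j / xv k * (pv j - pv k).
  apply: sumr_ge0 => j j_k; rewrite mulr_ge0 ?migration_weight_ge0 //.
  by rewrite pvk subr_ge0.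
have eta_le1' : 0 <= 1 - eta by rewrite subr_ge0.
have := mulr_ge0 (mulr_ge0 beta_ge0 eta_ge0) eta_le1'.
have := mulr_ge0 delta_ge0 eta_ge0.
rewrite p_rhsE; rewrite pvk in sum_ge0 *; lra.
Qed.

Lemma p_rhs_upper_barrier (xv pv : 'I_n -> R) (k : 'I_n) (eta : R) :
  (forall l, 0 < xv l) -> 0 <= beta k -> 0 <= delta k -> 0 <= eta ->
  (forall j, pv j <= 1 + eta) -> pv k = 1 + eta ->
  p_rhs Q beta delta xv pv k <= 0.
Proof.
move=> xv_gt0 beta_ge0 delta_ge0 eta_ge0 pv_le pvk.
have sum_le0 : \sum_(j | j != k) Q j k * xv j / xv k * (pv j - pv k) <= 0.
  apply: sumr_le0 => j j_k; rewrite mulr_ge0_le0 ?migration_weight_ge0 //.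
  by rewrite pvk subr_le0.
have := mulr_ge0 (addr_ge0 delta_ge0 (mulr_ge0 beta_ge0 eta_ge0)) (addr_ge0 ler01 eta_ge0).
rewrite p_rhsE; rewrite pvk in sum_le0 *; lra.
Qed.

Definition loss_rate (m : R) (k : 'I_n) : R := delta k + \sum_(j | j != k) Q j k / m.

Lemma loss_rate_ge0 (m : R) (k : 'I_n) : 0 < m -> 0 <= delta k -> 0 <= loss_rate m k.
Proof.
move=> m_gt0 delta_ge0; rewrite addr_ge0 // sumr_ge0 // => j j_k.
by rewrite divr_ge0 ?(generator_offdiag_ge0 Qgen j_k) ?(ltW m_gt0).
Qed.

Lemma p_rhs_ge (xv pv : 'I_n -> R) (k : 'I_n) (m : R) :
  0 < m -> (forall l, m <= xv l <= 1) -> 0 <= beta k -> (forall l, 0 <= pv l <= 1) ->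
  \sum_(j | j != k) Q j k * xv j / xv k * pv j - loss_rate m k * pv k
    <= p_rhs Q beta delta xv pv k.
Proof.
move=> m_gt0 xv_in beta_ge0 pv_in.
have xv_gt0 l : 0 < xv l by case/andP: (xv_in l) => /(lt_le_trans m_gt0).
have [pvk_ge0 pvk_le1] := andP (pv_in k).
have weights_le : \sum_(j | j != k) Q j k * xv j / xv k <= \sum_(j | j != k) Q j k / m.
  apply: ler_sum => j j_k; rewrite -mulrA.
  rewrite ler_wpM2l ?(generator_offdiag_ge0 Qgen j_k) //.
  have [_ xvj_le1] := andP (xv_in j); have [xvk_ge _] := andP (xv_in k).
  rewrite ler_pdivrMr // mulrC ler_pdivlMr //.
  by rewrite (le_trans (ler_wpM2r (ltW m_gt0) xvj_le1)) // mul1r.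
rewrite p_rhsE.
under [X in _ <= _ + X]eq_bigr do rewrite mulrBr.
rewrite sumrB -mulr_suml /loss_rate.
have := ler_wpM2r pvk_ge0 weights_le.
have pvk_le1' : 0 <= 1 - pv k by rewrite subr_ge0.
have := mulr_ge0 (mulr_ge0 beta_ge0 pvk_ge0) pvk_le1'.
lra.
Qed.

Lemma p_rhs_ge_neg (xv pv : 'I_n -> R) (k : 'I_n) (m : R) :
  0 < m -> (forall l, m <= xv l <= 1) -> 0 <= beta k -> 0 <= delta k ->
  (forall l, 0 <= pv l <= 1) ->
  - loss_rate m k <= p_rhs Q beta delta xv pv k.
Proof.
move=> m_gt0 xv_in beta_ge0 delta_ge0 pv_in.
apply: le_trans (p_rhs_ge m_gt0 xv_in beta_ge0 pv_in).
have xv_gt0 l : 0 < xv l by case/andP: (xv_in l) => /(lt_le_trans m_gt0).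
have [_ pvk_le1] := andP (pv_in k).
have : 0 <= \sum_(j | j != k) Q j k * xv j / xv k * pv j.
  apply: sumr_ge0 => j j_k; have [pvj_ge0 _] := andP (pv_in j).
  by rewrite mulr_ge0 ?migration_weight_ge0.
have : loss_rate m k * pv k <= loss_rate m k by rewrite ler_piMr ?loss_rate_ge0.
lra.
Qed.

Lemma p_rhs_ge_forcing (xv pv : 'I_n -> R) (j k : 'I_n) (m : R) :
  0 < m -> (forall l, m <= xv l <= 1) -> 0 <= beta k -> (forall l, 0 <= pv l <= 1) ->
  j != k -> Q j k * m * pv j - loss_rate m k * pv k <= p_rhs Q beta delta xv pv k.
Proof.
move=> m_gt0 xv_in beta_ge0 pv_in j_k.
apply: le_trans (p_rhs_ge m_gt0 xv_in beta_ge0 pv_in); rewrite lerD2r.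
have xv_gt0 l : 0 < xv l by case/andP: (xv_in l) => /(lt_le_trans m_gt0).
rewrite (bigD1 j) //= -[X in X <= _]addr0 lerD //; last first.
  apply: sumr_ge0 => i /andP[i_k _]; have [pvi_ge0 _] := andP (pv_in i).
  by rewrite mulr_ge0 ?migration_weight_ge0.
have [pvj_ge0 _] := andP (pv_in j).
have [xvj_ge _] := andP (xv_in j); have [_ xvk_le1] := andP (xv_in k).
rewrite ler_wpM2r // -mulrA ler_wpM2l ?(generator_offdiag_ge0 Qgen j_k) //.
by rewrite ler_pdivlMr // (le_trans _ xvj_ge) // ger_pMr.
Qed.

End LogisticField.

Section LogisticSolution.
Variables (R : realType) (n : nat) (Q : 'M[R]_n) (beta delta : 'I_n -> R).
Variables (p x : R -> 'I_n -> R).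
Hypothesis Qgen : generator Q.
Hypothesis beta_ge0 : forall k, 0 <= beta k.
Hypothesis delta_ge0 : forall k, 0 <= delta k.
Hypothesis p_cont : forall k, {within `[0, +oo[, continuous (fun t => p t k)}.
Hypothesis p_deriv : forall (t : R) (k : 'I_n), 0 < t ->
  is_derive t 1 (fun s => p s k) (p_rhs Q beta delta (x t) (p t) k).
Hypothesis x_pos : forall t, 0 <= t -> forall k, 0 < x t k.
Hypothesis p0_in : forall k, 0 <= p 0 k <= 1.

(* Any [L > 2 * beta k] makes the lower barrier strict, see [p_rhs_lower_barrier]. *)
Let L := 1 + 2 * \sum_k beta k.
Let pert eps s := eps * expR (L * s).

Lemma L_gt0 : 0 < L.
Proof. by rewrite /L ltr_pwDl // mulr_ge0 ?sumr_ge0. Qed.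

Lemma pert_deriv (eps s : R) : is_derive s 1 (pert eps) (L * pert eps s).
Proof.
apply: is_derive_eq (is_deriveZ eps (is_derive_expRM L s)) _.
by rewrite /pert /GRing.scale /=; ring.
Qed.

Lemma pert_within_continuous (eps : R) : {within `[0, +oo[, continuous (pert eps)}.
Proof. by apply: continuous_subspaceT => s; exact: is_derive_continuous (pert_deriv eps s). Qed.

Lemma p_gt_neg (t eta : R) : 0 <= t -> 0 < eta <= 1 -> forall k, - eta < p t k.
Proof.
move=> t_ge0 /andP[eta_gt0 eta_le1].
pose eps := eta * expR (- (L * t)).
have eps_gt0 : 0 < eps by rewrite mulr_gt0 ?expR_gt0.
have pert_t : pert eps t = eta by rewrite /pert -mulrA -expRD addNr expR0 mulr1.
have pert_le T : T <= t -> pert eps T <= eta.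
  by move=> T_t; rewrite -pert_t /pert ler_pM2l // ler_expR ler_pM2l // L_gt0.
move=> k; rewrite -pert_t -subr_gt0 opprK.
apply: (@barrier_positive _ _ (fun k s => p s k + pert eps s)
  (fun k s => p_rhs Q beta delta (x s) (p s) k + L * pert eps s) 0 t).
- move=> j; have [p0j_ge0 _] := andP (p0_in j).
  by rewrite /pert mulr0 expR0 mulr1 ltr_wpDl.
- by move=> j s; apply: continuousD; [exact: p_cont | exact: pert_within_continuous].
- by move=> j s s_gt0; apply: is_deriveD (p_deriv _ s_gt0) (pert_deriv eps s).
- move=> j T /andP[T_gt0 T_t] g_ge0 gjT0.
  have pert_gt0 : 0 < pert eps T by rewrite mulr_gt0 ?expR_gt0.
  have beta_le : beta j <= \sum_k beta k by exact: ler_term_sum.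
  have pTj : p T j = - pert eps T by apply/eqP; rewrite -addr_eq0 gjT0.
  have lower : - (2 * beta j * pert eps T) <= p_rhs Q beta delta (x T) (p T) j.
    apply: (p_rhs_lower_barrier Qgen _ (beta_ge0 j) (delta_ge0 j) _ _ pTj).
    - exact: x_pos (ltW T_gt0).
    - by rewrite ltW //= (le_trans (pert_le _ T_t)).
    - by move=> l; rewrite -subr_ge0 opprK.
  have := ler_wpM2r (ltW pert_gt0) beta_le.
  rewrite /L; lra.
- by rewrite t_ge0 lexx.
Qed.

Lemma p_lt_above (t eta : R) : 0 <= t -> 0 < eta -> forall k, p t k < 1 + eta.
Proof.
move=> t_ge0 eta_gt0.
pose eps := eta * expR (- (L * t)).
have eps_gt0 : 0 < eps by rewrite mulr_gt0 ?expR_gt0.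
have pert_t : pert eps t = eta by rewrite /pert -mulrA -expRD addNr expR0 mulr1.
move=> k; rewrite -pert_t -subr_gt0.
apply: (@barrier_positive _ _ (fun k => cst 1 + pert eps - p^~ k)
  (fun k s => L * pert eps s - p_rhs Q beta delta (x s) (p s) k) 0 t).
- move=> j; have [_ p0j_le1] := andP (p0_in j).
  by rewrite !fctE /pert mulr0 expR0 mulr1 subr_gt0 ltr_pwDr.
- move=> j s; apply: continuousB; last exact: p_cont.
  by apply: continuousD; [exact: cst_continuous | exact: pert_within_continuous].
- move=> j s s_gt0; rewrite -[L * _]add0r.
  apply: is_deriveB (p_deriv _ s_gt0).
  exact: is_deriveD (is_derive_cst (1 : R) s 1) (pert_deriv eps s).
- move=> j T /andP[T_gt0 T_t] g_ge0; rewrite !fctE => gjT0.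
  have pert_gt0 : 0 < pert eps T by rewrite mulr_gt0 ?expR_gt0.
  have pTj : p T j = 1 + pert eps T by apply/eqP; rewrite eq_sym -subr_eq0 gjT0.
  have : p_rhs Q beta delta (x T) (p T) j <= 0.
    apply: (p_rhs_upper_barrier Qgen _ (beta_ge0 j) (delta_ge0 j) (ltW pert_gt0) _ pTj).
    - exact: x_pos (ltW T_gt0).
    - by move=> l; have := g_ge0 l; rewrite !fctE subr_ge0.
  have := mulr_gt0 L_gt0 pert_gt0.
  lra.
- by rewrite t_ge0 lexx.
Qed.

Lemma p_ge0 (t : R) : 0 <= t -> forall k, 0 <= p t k.
Proof.
move=> t_ge0 k; apply/ler_addgt0Pr => e e_gt0.
have min_in : 0 < Num.min e 1 <= 1 by rewrite lt_min e_gt0 ltr01 ge_min lexx orbT.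
have := p_gt_neg t_ge0 min_in k.
have : Num.min e 1 <= e by rewrite ge_min lexx.
lra.
Qed.

Lemma p_le1 (t : R) : 0 <= t -> forall k, p t k <= 1.
Proof. by move=> t_ge0 k; apply/ler_addgt0Pr => e e_gt0; exact/ltW/p_lt_above. Qed.

Lemma p_cvg0_pred (j k : 'I_n) (T1 m : R) :
  0 < T1 -> 0 < m -> (forall t, T1 <= t -> forall l, m <= x t l <= 1) ->
  0 < Q j k -> p t k @[t --> +oo] --> 0 -> p t j @[t --> +oo] --> 0.
Proof.
move=> T1_gt0 m_gt0 x_in Qjk_gt0.
have t_gt0 t : T1 < t -> 0 < t by apply: lt_trans.
have p_in t : T1 < t -> forall l, 0 <= p t l <= 1.
  by move=> /t_gt0/ltW t_ge0 l; rewrite p_ge0 ?p_le1.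
apply: (@cvg0_of_forcing _ (p^~ j) (p^~ k) (fun t => p_rhs Q beta delta (x t) (p t) j)
  (fun t => p_rhs Q beta delta (x t) (p t) k) T1 (Q j k * m) (loss_rate Q delta m k)
  (loss_rate Q delta m j + 1))
  => [|||t /t_gt0|t /t_gt0|t /p_in/(_ j)/andP[] //|t T1_t|t T1_t].
- exact: mulr_gt0.
- exact: loss_rate_ge0.
- by have := loss_rate_ge0 Qgen m_gt0 (delta_ge0 j); lra.
- exact: p_deriv.
- exact: p_deriv.
- have := @p_rhs_ge_neg _ _ Q beta delta Qgen (x t) (p t) j m m_gt0 (x_in t (ltW T1_t))
    (beta_ge0 j) (delta_ge0 j) (p_in t T1_t).
  lra.
- exact: (@p_rhs_ge_forcing _ _ Q beta delta Qgen (x t) (p t) j k m m_gt0 (x_in t (ltW T1_t))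
    (beta_ge0 k) (p_in t T1_t) (generator_pos_neq Qgen Qjk_gt0)).
Qed.

End LogisticSolution.

Unset Implicit Arguments.
Set Strict Implicit.

Theorem lemma1 (R : realType) (n : nat) (Q : 'M[R]_n) (beta delta : 'I_n -> R)
  (p x : R -> 'I_n -> R) :
  (2 <= n)%N ->
  generator Q -> irreducible_gen Q ->
  (forall i, 0 < beta i) -> (forall i, 0 <= delta i) ->
  is_solution Q beta delta p x ->
  (forall i, 0 <= p 0 i <= 1) ->
  (forall i, 0 < x 0 i < 1) -> \sum_(i < n) x 0 i = 1 ->
  (exists i : 'I_n, p t i @[t --> +oo] --> (0 : R)) ->
  forall j : 'I_n, p t j @[t --> +oo] --> (0 : R).
Proof.
move=> _ Qgen Qirr beta_gt0 delta_ge0 [p_cont [x_cont [p_deriv x_deriv]]] p0_in.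
move=> x0_in x0_sum [i pi_cvg0] j.
have beta_ge0 k : 0 <= beta k by apply: ltW.
have x0_pos k : 0 < x 0 k by case/andP: (x0_in k).
have x_pos := x_pos Qgen x_cont x_deriv x0_pos.
have [T1 T1_gt0 [m m_gt0 x_ge_m]] := x_lower_bound Qgen x_cont x_deriv x0_pos Qirr x0_sum.
have x_in t : T1 <= t -> forall k, m <= x t k <= 1.
  move=> T1_t k; rewrite x_ge_m // (x_le1 Qgen x_cont x_deriv x0_pos x0_sum) //.
  exact: le_trans (ltW T1_gt0) T1_t.
apply: (connect_ind_backward (P := fun k => p t k @[t --> +oo] --> 0)) pi_cvg0 _ j (Qirr j i).
move=> u v Quv.
exact: p_cvg0_pred Qgen beta_ge0 delta_ge0 p_cont p_deriv x_pos p0_in _ _ _ _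
  T1_gt0 m_gt0 x_in Quv.
Qed.
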